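(* Let $f:\{0,1\}^N\to\{0,1\}$ be a Boolean function and let $\tilde f:\{0,1\}^N\to\mathbb R$ be a real multilinear polynomial in $x_0,\dots,x_{N-1}$ that approximates $f$ with error probability $\epsilon$, i.e. $|f(x)-\tilde f(x)|\le\epsilon$ for all $x\in\{0,1\}^N$. Then $$\deg(\tilde f)\;\ge\;\frac14\Big(1-\frac{3\epsilon}{1+\epsilon}\Big)^2\rho_f\,N .$$
   Context: For $x\in\{0,1\}^N$, $e_i$ is the string with a single $1$ in position $i$ and $+$ is bitwise XOR. The influence of variable $i$ is $\mathrm{Inf}_i(f)=\Pr_x[f(x)\ne f(x+e_i)]$ with $x$ uniform in $\{0,1\}^N$, and the average influence is $\rho_f=\frac1N\sum_{i=0}^{N-1}\mathrm{Inf}_i(f)$. *)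

From HB Require Import structures.
From mathcomp Require Import all_boot all_order all_algebra.
From mathcomp Require Export mpoly.
Set Implicit Arguments. Unset Strict Implicit. Unset Printing Implicit Defensive.
Import Order.TTheory GRing.Theory Num.Theory.
Local Open Scope ring_scope.

Definition flip (N : nat) (i : 'I_N) (x : {ffun 'I_N -> bool}) : {ffun 'I_N -> bool} :=
  [ffun j => if j == i then ~~ x j else x j].

Definition influence (R : numFieldType) (N : nat)
  (f : {ffun 'I_N -> bool} -> bool) (i : 'I_N) : R :=
  #|[set x : {ffun 'I_N -> bool} | f x != f (flip i x)]|%:R / (2 ^ N)%:R.

Definition avg_influence (R : numFieldType) (N : nat)
  (f : {ffun 'I_N -> bool} -> bool) : R :=
  (\sum_(i < N) influence R f i) / N%:R.

Definition multilinear (R : ringType) (N : nat) (p : {mpoly R[N]}) : Prop :=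
  forall m, m \in msupp p -> forall i : 'I_N, (m i <= 1)%N.

(* total degree of a multivariate polynomial (msize p = 1 + deg p, 0 for p = 0) *)
Definition mpoly_deg (R : ringType) (N : nat) (p : {mpoly R[N]}) : nat :=
  (msize p).-1.

(* Let g = p - 1/2, where p is the polynomial restricted to the cube. In the Walsh basis g has no
   coefficient at sets larger than d = deg p, and the derivative x |-> g x - g (x + e_i) doubles
   the coefficients at sets containing i and kills the others, so by Parseval the total energy of
   the derivatives is at most 4 d times the energy of g, itself at most 2^N (1/2 + eps)^2. Wherever
   f x <> f (x + e_i) the derivative has size at least 1 - 2 eps, whence
   (1 - 2 eps)^2 N rho_f <= d (1 + 2 eps)^2; as 1 + 2 eps <= 2 (1 + eps), this gives the claim. *)
From HB Require Import structures.
From mathcomp Require Import all_boot all_order all_algebra.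
From mathcomp Require Import mpoly.
From mathcomp Require Import ring lra.
Import Order.TTheory GRing.Theory Num.Theory.
Local Open Scope ring_scope.
Set Implicit Arguments. Unset Strict Implicit.

Section WalshFourier.

Variables (R : comNzRingType) (N : nat).
Notation cube := {ffun 'I_N -> bool}.

Definition walsh (t x : cube) : R := \prod_i (-1) ^+ (t i && x i).

(* Unnormalised: [fourier g t] is 2^N times the usual Walsh coefficient. *)
Definition fourier (g : cube -> R) (t : cube) : R := \sum_x g x * walsh t x.

Definition weight (t : cube) : nat := \sum_i t i.

Definition Dflip (g : cube -> R) (i : 'I_N) (x : cube) : R := g x - g (flip i x).

Lemma sum_cube_prod (F : 'I_N -> bool -> R) :
  \sum_(x : cube) \prod_i F i (x i) = \prod_i (F i true + F i false).
Proof. by rewrite -bigA_distr_bigA; apply: eq_bigr => i _; rewrite big_bool. Qed.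

Lemma sum_walsh_mul (y x : cube) :
  \sum_t walsh t y * walsh t x = if y == x then (2 ^ N)%:R else 0.
Proof.
pose F i b : R := (-1) ^+ (b && y i) * (-1) ^+ (b && x i).
have -> : \sum_t walsh t y * walsh t x = \prod_i (F i true + F i false).
  by rewrite -sum_cube_prod; apply: eq_bigr => t _; rewrite -big_split.
rewrite {}/F; have [<-|neq_yx] := eqVneq y x.
  rewrite (eq_bigr (fun _ => 2%:R)) ?prodr_const ?card_ord ?natrX // => i _.
  by case: (y i); rewrite /= ?mulrNN mulr1.
have [i neq_i] : exists i, y i != x i.
  apply/existsP; apply: contraNT neq_yx; rewrite negb_exists => /forallP eq_yx.
  by apply/eqP/ffunP => i; apply/eqP; rewrite -[_ == _]negbK eq_yx.
rewrite (bigD1 i) //=.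
by case: (y i) (x i) neq_i => [] [] //= _; rewrite ?mulr1 ?mul1r addNr mul0r.
Qed.

Lemma fourier_inversion (g : cube -> R) x :
  \sum_t fourier g t * walsh t x = (2 ^ N)%:R * g x.
Proof.
under eq_bigr do rewrite /fourier mulr_suml.
rewrite exchange_big.
under eq_bigr do under eq_bigr do rewrite -mulrA.
under eq_bigr do rewrite -mulr_sumr sum_walsh_mul.
rewrite (bigD1 x) //= eqxx big1 ?addr0 1?mulrC // => y /negbTE ->; exact: mulr0.
Qed.

Lemma parseval (g : cube -> R) :
  (2 ^ N)%:R * \sum_x g x ^+ 2 = \sum_t fourier g t ^+ 2.
Proof.
rewrite mulr_sumr.
under eq_bigr do rewrite expr2 mulrCA -fourier_inversion mulr_sumr.
rewrite exchange_big; apply: eq_bigr => t _.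
by rewrite expr2 {2}/fourier mulr_sumr; apply: eq_bigr => x _; rewrite mulrCA.
Qed.

Lemma eq_fourier (g1 g2 : cube -> R) : g1 =1 g2 -> fourier g1 =1 fourier g2.
Proof. by move=> eq_g t; apply: eq_bigr => x _; rewrite eq_g. Qed.

Lemma fourierB (g1 g2 : cube -> R) t :
  fourier (fun x => g1 x - g2 x) t = fourier g1 t - fourier g2 t.
Proof. by rewrite /fourier -sumrB; apply: eq_bigr => x _; rewrite mulrBl. Qed.

Lemma fourierZ c (g : cube -> R) t : fourier (fun x => c * g x) t = c * fourier g t.
Proof. by rewrite /fourier mulr_sumr; apply: eq_bigr => x _; rewrite mulrA. Qed.

Lemma fourier_sum (I : Type) (s : seq I) (F : I -> cube -> R) t :
  fourier (fun x => \sum_(m <- s) F m x) t = \sum_(m <- s) fourier (F m) t.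
Proof.
rewrite /fourier; under eq_bigr do rewrite mulr_suml.
by rewrite exchange_big.
Qed.

Lemma flipK (i : 'I_N) : involutive (flip i).
Proof. by move=> x; apply/ffunP => j; rewrite !ffunE; case: eqP; rewrite ?negbK. Qed.

Lemma walsh_flip (t : cube) i x : walsh t (flip i x) = (-1) ^+ t i * walsh t x.
Proof.
rewrite /walsh (bigD1 i) // [in RHS](bigD1 i) //= mulrA; congr (_ * _).
  by rewrite ffunE eqxx; case: (t i) (x i) => [] [] /=; rewrite ?mulrNN ?mul1r ?mulr1.
by apply: eq_bigr => j /negbTE neq_ji; rewrite ffunE neq_ji.
Qed.

Lemma fourier_Dflip g i (t : cube) :
  fourier (Dflip g i) t = (1 - (-1) ^+ t i) * fourier g t.
Proof.
rewrite fourierB mulrBl mul1r; congr (_ - _).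
rewrite /fourier (reindex_inj (inv_inj (flipK i))) mulr_sumr.
by apply: eq_bigr => x _; rewrite flipK walsh_flip mulrCA.
Qed.

Lemma weight_gt_sum t (n : 'I_N -> nat) :
  (\sum_i n i < weight t)%N -> exists2 i, t i & n i == 0%N.
Proof.
move=> lt_sum; have /existsP[i /andP[ti ni0]] : [exists i, t i && (n i == 0%N)].
  apply: contraLR lt_sum; rewrite negb_exists => /forallP n_pos.
  rewrite -leqNgt; apply: leq_sum => i _.
  by have := n_pos i; case: (t i); rewrite //= lt0n.
by exists i.
Qed.

End WalshFourier.

Section SpectralBounds.

Variables (R : realDomainType) (N : nat).
Notation cube := {ffun 'I_N -> bool}.
Implicit Types (g : cube -> R) (t : cube).

Lemma fourier_flip_invariant g t i :
  t i -> (forall x, g (flip i x) = g x) -> fourier g t = 0.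
Proof.
move=> ti g_inv; have := fourier_Dflip g i t.
rewrite ti expr1 opprK -mulr2n (eq_fourier (g2 := fun=> 0)) => [|x]; last first.
  by rewrite /Dflip g_inv subrr.
rewrite /fourier big1 => [/esym/eqP|x _]; last exact: mul0r.
by rewrite mulf_eq0 pnatr_eq0 /= => /eqP.
Qed.

Lemma fourier_cst (c : R) t : (0 < weight t)%N -> fourier (fun=> c) t = 0.
Proof.
move=> pos_t; have [i ti _] : exists2 i, t i & 0%N == 0%N.
  by apply: (@weight_gt_sum _ _ (fun=> 0%N)); rewrite big1_eq.
exact: fourier_flip_invariant ti _.
Qed.

(* Parseval twice: [Dflip g i] doubles the coefficients at the t with [t i] and kills the others. *)
Lemma sum_Dflip_energy g (d : nat) :
  (forall t, (d < weight t)%N -> fourier g t = 0) ->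
  \sum_i \sum_x Dflip g i x ^+ 2 <= 4 * d%:R * \sum_x g x ^+ 2.
Proof.
move=> g_spec.
have pos2N : 0 < (2 ^ N)%:R :> R by rewrite ltr0n expn_gt0.
rewrite -(ler_pM2l pos2N) [X in _ <= X]mulrCA parseval !mulr_sumr.
under eq_bigr do rewrite parseval.
rewrite exchange_big; apply: ler_sum => t _.
have -> : \sum_i fourier (Dflip g i) t ^+ 2 = 4 * (weight t)%:R * fourier g t ^+ 2.
  rewrite /weight natr_sum mulr_sumr mulr_suml; apply: eq_bigr => i _.
  by rewrite fourier_Dflip; case: (t i) => /=; rewrite ?expr1 ?expr0 ?subrr; ring.
have [le_wd|lt_dw] := leqP (weight t) d.
  by apply: ler_wpM2r; rewrite ?sqr_ge0 // ler_pM2l ?ltr0n // ler_nat.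
by rewrite g_spec // expr0n /= !mulr0.
Qed.

Lemma fourier_meval_eq0 (p : {mpoly R[N]}) t :
  (mpoly_deg p < weight t)%N -> fourier (fun x => meval (fun i => (x i)%:R) p) t = 0.
Proof.
move=> lt_deg; rewrite (eq_fourier (fun x => mevalE _ _)) fourier_sum big_seq big1 // => m m_p.
have [i ti /eqP mi0] : exists2 i, t i & m i == 0%N.
  apply: weight_gt_sum; rewrite -mdegE; apply: leq_ltn_trans lt_deg.
  by have lt_size := msize_mdeg_lt m_p; rewrite -ltnS (ltn_predK lt_size).
rewrite fourierZ (fourier_flip_invariant ti) ?mulr0 // => x.
by apply: eq_bigr => j _; rewrite ffunE; case: eqP => [->|//]; rewrite mi0 !expr0.
Qed.

End SpectralBounds.

Lemma avg_influenceMn (R : numFieldType) N (f : {ffun 'I_N -> bool} -> bool) :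
  avg_influence R f * N%:R = \sum_i influence R f i.
Proof.
rewrite /avg_influence; case: N f => [|n] f; first by rewrite big_ord0 !mul0r.
by rewrite divfK // pnatr_eq0.
Qed.

Lemma sum_influence_le (R : realFieldType) N (f : {ffun 'I_N -> bool} -> bool)
    (p : {ffun 'I_N -> bool} -> R) (d : nat) (eps : R) :
  (forall t, (d < weight t)%N -> fourier p t = 0) ->
  eps < 1 / 2 ->
  (forall x, `|(f x)%:R - p x| <= eps) ->
  (1 - 2 * eps) ^+ 2 * \sum_i influence R f i <= d%:R * (1 + 2 * eps) ^+ 2.
Proof.
move=> p_spec eps_lt approx.
pose g x := p x - 1 / 2.
have near x : - eps <= (f x)%:R - p x <= eps by rewrite -ler_norml.
have g_spec t : (d < weight t)%N -> fourier g t = 0.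
  move=> lt_dt; rewrite fourierB p_spec // fourier_cst ?subr0 //.
  exact: leq_ltn_trans (leq0n d) lt_dt.
have g_small x : g x ^+ 2 <= (1 / 2 + eps) ^+ 2.
  rewrite -real_normK ?num_real // ler_sqr ?nnegrE ?normr_ge0 //; last first.
    by have := near x; case/andP; lra.
  rewrite ler_norml /g; have := near x.
  by case: (f x); rewrite /= ?mulr1n ?mulr0n => /andP[? ?]; apply/andP; split; lra.
have Dg_large i x : f x != f (flip i x) -> (1 - 2 * eps) ^+ 2 <= Dflip g i x ^+ 2.
  move=> neq_f; rewrite -[Dflip g i x ^+ 2]real_normK ?num_real //.
  rewrite ler_sqr ?nnegrE ?normr_ge0 //; last by lra.
  rewrite ler_normr /Dflip /g; move: neq_f (near x) (near (flip i x)).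
  case: (f x); case: (f (flip i x)); rewrite //= ?mulr1n ?mulr0n => _ /andP[? ?] /andP[? ?].
    by apply/orP; left; lra.
  by apply/orP; right; lra.
have count i : (1 - 2 * eps) ^+ 2 * #|[set x | f x != f (flip i x)]|%:R
    <= \sum_x Dflip g i x ^+ 2.
  rewrite mulr_natr -sumr_const big_mkcond; apply: ler_sum => x _.
  by rewrite inE; case: ifP => [/Dg_large //|_]; apply: sqr_ge0.
have energy_g : \sum_x g x ^+ 2 <= (2 ^ N)%:R * (1 / 2 + eps) ^+ 2.
  apply: le_trans (ler_sum _ (fun x _ => g_small x)) _.
  by rewrite sumr_const card_ffun card_bool card_ord mulr_natl.
have pos2N : 0 < (2 ^ N)%:R :> R by rewrite ltr0n expn_gt0.
rewrite /influence -mulr_suml mulrA ler_pdivrMr // mulr_sumr.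
apply: le_trans (ler_sum _ (fun i _ => count i)) _.
apply: le_trans (sum_Dflip_energy g_spec) _.
rewrite [leRHS](_ : _ = 4 * d%:R * ((2 ^ N)%:R * (1 / 2 + eps) ^+ 2)); last by field.
by apply: ler_wpM2l energy_g; rewrite mulr_ge0 ?ler0n.
Qed.

Theorem theorem6 (R : realFieldType) (N : nat)
    (f : {ffun 'I_N -> bool} -> bool) (ft : {mpoly R[N]}) (eps : R) :
  multilinear ft ->
  eps < 1 / 2 ->
  (forall x : {ffun 'I_N -> bool},
      `| (f x)%:R - meval (fun i => (x i)%:R) ft | <= eps) ->
  1 / 4 * (1 - 3 * eps / (1 + eps)) ^+ 2 * avg_influence R f * N%:R
    <= (mpoly_deg ft)%:R.
Proof.
move=> _ eps_lt approx.
have := sum_influence_le (@fourier_meval_eq0 _ _ ft) eps_lt approx.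
rewrite -mulrA avg_influenceMn.
set S := \sum_i _; set d := (mpoly_deg ft)%:R => S_le.
have eps_ge0 : 0 <= eps := le_trans (normr_ge0 _) (approx [ffun=> false]).
have pos_eps1 : 0 < 1 + eps by lra.
have -> : 1 / 4 * (1 - 3 * eps / (1 + eps)) ^+ 2 * S
    = (1 - 2 * eps) ^+ 2 * S / (4 * (1 + eps) ^+ 2).
  by field; rewrite lt0r_neq0.
rewrite ler_pdivrMr ?mulr_gt0 ?exprn_gt0 //; apply: le_trans S_le _.
have d_ge0 : 0 <= d by rewrite ler0n.
nra.
Qed.
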